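(* Let $G$ be a game over a graph $\Gamma=(V,E)$, let $(U,W)$ be a cut of $\Gamma$, and let $A\subseteq U$, $B\subseteq V$, $C\subseteq W$. If $G\vDash A\cup B\rhd C$, then $G\vDash {\cal B}(U)\cup{\cal B}(W)\cup B\rhd C$.
   Context: Graphs are finite, undirected, with no loops or multiple edges; $Adj^+(v)$ is $v$ together with its neighbours. A cut $(U,W)$ is a partition $V=U\sqcup W$. The border of $U\subseteq V$ is ${\cal B}(U)=\{v\in U\mid (v,w)\in E\text{ for some }w\in V\setminus U\}$. A game over $\Gamma$ is a strategic game with player set $V$, finite strategy sets $S_v$, and pay-off functions $u_v$ depending only on the strategies of players in $Adj^+(v)$. $NE(G)$ is its set of pure Nash equilibria. For profiles $\mathbf s,\mathbf t$ and $X\subseteq V$, $\mathbf s=_X\mathbf t$ means they agree on every player of $X$. $G\vDash A\rhd B$ means: for all $\mathbf s,\mathbf t\in NE(G)$, $\mathbf s=_A\mathbf t$ implies $\mathbf s=_B\mathbf t$. *)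

From mathcomp Require Import all_boot all_order all_algebra.
Set Implicit Arguments. Unset Strict Implicit. Unset Printing Implicit Defensive.
Import Order.TTheory GRing.Theory Num.Theory.
Local Open Scope ring_scope.

Section Defs.
Variables (V : finType) (S : V -> finType).

Definition profile := forall v : V, S v.

Definition adjp (e : rel V) (v : V) : {set V} := [set w | (w == v) || e v w].

Definition border (e : rel V) (U : {set V}) : {set V} :=
  [set v in U | [exists w, (w \notin U) && e v w]].

Variable R : realDomainType.

Definition local_payoffs (e : rel V) (u : V -> profile -> R) : Prop :=
  forall (v : V) (s t : profile),
    (forall w, w \in adjp e v -> s w = t w) -> u v s = u v t.

Definition is_NE (u : V -> profile -> R) (s : profile) : Prop :=
  forall (v : V) (t : profile),
    (forall w, w != v -> t w = s w) -> u v t <= u v s.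

Definition agree_on (X : {set V}) (s t : profile) : Prop :=
  forall v, v \in X -> s v = t v.

Definition entails (u : V -> profile -> R) (X Y : {set V}) : Prop :=
  forall s t : profile, is_NE u s -> is_NE u t -> agree_on X s t -> agree_on Y s t.

End Defs.

From mathcomp Require Import all_boot all_order all_algebra.
Import Order.TTheory GRing.Theory Num.Theory.
Set Implicit Arguments. Unset Strict Implicit. Unset Printing Implicit Defensive.
Local Open Scope ring_scope.

(* Splice two equilibria s and t along the cut: play s on U and t on W. Since
   payoffs are local and s, t agree on both borders, every player sees around it
   exactly what it sees in s (if in U) or in t (if in W), so the splice is again
   an equilibrium. It agrees with s on A and B, hence with s on C; it agrees
   with t on C by construction. *)

Section Splice.

Variables (V : finType) (e : rel V) (S : V -> finType) (R : realDomainType).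
Variable u : V -> profile S -> R.
Hypothesis u_loc : local_payoffs e u.

Lemma is_NE_local (s r : profile S) (v : V) :
  is_NE u s -> (forall w, w \in adjp e v -> r w = s w) ->
  forall t, (forall w, w != v -> t w = r w) -> u v t <= u v r.
Proof.
move=> NEs rs t tr.
(* t' is the same deviation of v, performed from s instead of r. *)
pose t' : profile S := fun w => if w == v then t w else s w.
have -> : u v t = u v t'.
  by apply: u_loc => w Hw; rewrite /t'; case: eqP => // /eqP wv; rewrite tr // rs.
have -> : u v r = u v s by apply: u_loc.
by apply: NEs => w; rewrite /t'; case: eqP.
Qed.

Definition splice (U : {set V}) (s t : profile S) : profile S :=
  fun w => if w \in U then s w else t w.

Lemma spliceC (U : {set V}) (s t : profile S) (w : V) :
  splice U s t w = splice (~: U) t s w.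
Proof. by rewrite /splice in_setC; case: (w \in U). Qed.

Hypothesis e_sym : symmetric e.

Lemma adjp_out_border (U : {set V}) (v w : V) :
  v \in U -> w \in adjp e v -> w \notin U -> w \in border e (~: U).
Proof.
move=> vU; rewrite inE => /orP [/eqP -> | evw] wU; first by rewrite vU in wU.
rewrite inE in_setC wU /=; apply/existsP; exists v.
by rewrite in_setC vU e_sym.
Qed.

Lemma splice_adjp (U : {set V}) (s t : profile S) (v : V) :
  v \in U -> agree_on (border e (~: U)) s t ->
  forall w, w \in adjp e v -> splice U s t w = s w.
Proof.
move=> vU st w vw; rewrite /splice; case: ifPn => // wU.
by rewrite st // (adjp_out_border vU vw).
Qed.

Lemma splice_NE (U : {set V}) (s t : profile S) :
  is_NE u s -> is_NE u t -> agree_on (border e U :|: border e (~: U)) s t ->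
  is_NE u (splice U s t).
Proof.
move=> NEs NEt st v; have [vU | vW] := boolP (v \in U).
  apply: (is_NE_local NEs); apply: splice_adjp => // w Bw.
  by apply: st; rewrite inE Bw orbT.
apply: (is_NE_local NEt) => w vw; rewrite spliceC.
have ts : agree_on (border e (~: ~: U)) t s.
  by rewrite setCK => x Bx; rewrite st // inE Bx.
by apply: splice_adjp ts w vw; rewrite in_setC.
Qed.

End Splice.

Theorem lemma4 (V : finType) (e : rel V) (e_sym : symmetric e) (e_irr : irreflexive e)
  (S : V -> finType) (R : realDomainType) (u : V -> profile S -> R)
  (u_loc : local_payoffs e u)
  (U A B C : {set V}) (hA : A \subset U) (hC : C \subset ~: U) :
  entails u (A :|: B) C ->
  entails u (border e U :|: border e (~: U) :|: B) C.
Proof.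
move=> entAB s t NEs NEt st.
have st_borders : agree_on (border e U :|: border e (~: U)) s t.
  by move=> w Hw; apply: st; rewrite inE Hw.
have NEr := splice_NE u_loc e_sym NEs NEt st_borders.
have s_r : agree_on (A :|: B) s (splice U s t).
  move=> w; rewrite inE /splice => /orP [wA | wB]; first by rewrite (subsetP hA).
  by case: ifP => // _; apply: st; rewrite inE wB orbT.
move=> w wC; rewrite (entAB _ _ NEs NEr s_r w wC) /splice.
by move: (subsetP hC w wC); rewrite in_setC => /negbTE ->.
Qed.
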